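(* For all odd integers $n\ge1$ and real numbers $a\ge1$, $x,y\in(0,\pi)$, we have $\Theta_{n,a}(x,y)\ge\sin(x)\sin(y)$. Equality holds if and only if $n=1$.
   Context: For a real number $a$ and integers $0\le m$, $\binom{m+a}{m}=\frac{(a+1)(a+2)\cdots(a+m)}{m!}$ (equal to $1$ when $m=0$). For an integer $n\ge1$, $\Theta_{n,a}(x,y)=\sum_{j=1}^n\binom{n+a-j}{n-j}\frac{\sin(jx)\sin(jy)}{j}$. *)

From Stdlib Require Import Reals Lra Lia Arith Factorial.
Open Scope R_scope.

Fixpoint rising_prod (a : R) (m : nat) : R :=
  match m with
  | O => 1
  | S k => rising_prod a k * (a + INR (S k))
  end.

(* generalized binomial  binom(m+a, m) = (a+1)...(a+m)/m!  (= 1 when m = 0) *)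
Definition gbinom (m : nat) (a : R) : R := rising_prod a m / INR (fact m).

(* Theta_{n,a}(x,y) = sum_{j=1}^n binom(n+a-j, n-j) sin(jx) sin(jy) / j *)
Definition Theta (n : nat) (a x y : R) : R :=
  sum_f_R0 (fun i => let j := S i in
    gbinom (n - j) a * (sin (INR j * x) * sin (INR j * y)) / INR j) (n - 1).

(* Put c_j = binom(n+a-j, n-j) - [j = 1], C(t) = sum_j c_j cos(jt)/j and S(t) = -C'(t)
   = sum_j c_j sin(jt).  By product-to-sum, Theta_{n,a}(x,y) - sin x sin y = (C(u) - C(w))/2
   with 0 <= u = |x - y| < w <= pi (w = x + y, or 2 pi - x - y), so it suffices that C is
   strictly decreasing on [0, pi], i.e. that S >= 0 on (0, pi) with at most one zero.
   Two Abel summations, each trading binom(m+b, m) for partial sums via the hockey-stick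
   identity, give S(t) >= F_n(t) - sin t, where F_n is the Fejer-type sum of the partial sums
   of sum_j sin(jt): the coefficients binom(m+a-2, m) that are dropped are >= 0 as a >= 1.
   Finally, for n = 2k + 1 the identity
     2 (1 - cos t) (F_n(t) - sin t) = 2k sin t + sin 2t - sin((2k+2)t)
   and |sin(kt)| <= k sin t show F_n - sin t >= 0, with a zero only for k = 1, t = 2 pi / 3. *)
From Stdlib Require Import Reals Lra Lia Arith.
From Coquelicot Require Import Coquelicot.
Open Scope R_scope.

Fixpoint sum_lt (f : nat -> R) (n : nat) : R :=
  match n with O => 0 | S k => sum_lt f k + f k end.

Lemma sum_f_R0_sum_lt f n : sum_f_R0 f n = sum_lt f (S n).
Proof. induction n as [|n IH]; simpl in *; [lra | rewrite IH; reflexivity]. Qed.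

Lemma sum_lt_ext f g n : (forall i, (i < n)%nat -> f i = g i) -> sum_lt f n = sum_lt g n.
Proof.
  induction n as [|n IH]; intros Hfg; simpl; [reflexivity|].
  rewrite IH by (intros; apply Hfg; lia). rewrite Hfg by lia. reflexivity.
Qed.

Lemma sum_lt_add f g n : sum_lt (fun i => f i + g i) n = sum_lt f n + sum_lt g n.
Proof. induction n; simpl; lra. Qed.

Lemma sum_lt_sub f g n : sum_lt (fun i => f i - g i) n = sum_lt f n - sum_lt g n.
Proof. induction n; simpl; lra. Qed.

Lemma sum_lt_scal c f n : sum_lt (fun i => c * f i) n = c * sum_lt f n.
Proof. induction n as [|n IH]; simpl; [ring | rewrite IH; ring]. Qed.

Lemma sum_lt_zero n : sum_lt (fun _ => 0) n = 0.
Proof. induction n; simpl; lra. Qed.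

Lemma sum_lt_last f n : sum_lt f (S n) = sum_lt f n + f n.
Proof. reflexivity. Qed.

Lemma sum_lt_first f n : sum_lt f (S n) = f O + sum_lt (fun k => f (S k)) n.
Proof. induction n as [|n IH]; simpl in *; [ring | rewrite IH; ring]. Qed.

Lemma sum_lt_swap (f : nat -> nat -> R) n m :
  sum_lt (fun i => sum_lt (fun j => f i j) m) n = sum_lt (fun j => sum_lt (fun i => f i j) n) m.
Proof.
  induction n as [|n IH]; simpl.
  - rewrite sum_lt_zero; reflexivity.
  - rewrite IH, <- sum_lt_add. reflexivity.
Qed.

Lemma sum_lt_nonneg f n : (forall i, (i < n)%nat -> 0 <= f i) -> 0 <= sum_lt f n.
Proof.
  induction n as [|n IH]; intros Hf; simpl; [lra|].
  assert (0 <= f n) by (apply Hf; lia).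
  assert (0 <= sum_lt f n) by (apply IH; intros; apply Hf; lia).
  lra.
Qed.

Lemma sum_lt_truncate (h : nat -> R) k n : (k < n)%nat ->
  sum_lt (fun i => if (i <=? k)%nat then h i else 0) n = sum_lt h (S k).
Proof.
  induction n as [|n IH]; intros Hk; [lia|].
  destruct (Nat.eq_dec k n) as [->|Hne]; simpl.
  - rewrite Nat.leb_refl. f_equal. apply sum_lt_ext. intros i Hi.
    replace (i <=? n)%nat with true by (symmetry; apply Nat.leb_le; lia). reflexivity.
  - rewrite IH by lia. replace (n <=? k)%nat with false by (symmetry; apply Nat.leb_gt; lia).
    simpl. ring.
Qed.

Lemma sum_lt_drop_first_unit (b h : nat -> R) n :
  sum_lt (fun i => (b i - (if (i =? 0)%nat then 1 else 0)) * h i) (S n) =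
  sum_lt (fun i => b i * h i) (S n) - h O.
Proof.
  rewrite sum_lt_first, (sum_lt_first (fun i => b i * h i)).
  rewrite (sum_lt_ext _ (fun k => b (S k) * h (S k))) by (intros; simpl; ring).
  simpl. ring.
Qed.

Lemma rising_prod_pred b m : rising_prod (b - 1) (S m) = b * rising_prod b m.
Proof.
  induction m as [|m IH]; simpl in *; [ring|].
  rewrite IH. destruct m; simpl; ring.
Qed.

Lemma gbinom_0 b : gbinom 0 b = 1.
Proof. unfold gbinom; simpl. lra. Qed.

Lemma gbinom_pascal m b : gbinom (S m) b = gbinom m b + gbinom (S m) (b - 1).
Proof.
  unfold gbinom. rewrite rising_prod_pred, fact_simpl, mult_INR.
  change (rising_prod b (S m)) with (rising_prod b m * (b + INR (S m))).
  pose proof (INR_fact_lt_0 m). pose proof (pos_INR m).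
  rewrite !S_INR. field. lra.
Qed.

Lemma gbinom_nonneg m b : -1 <= b -> 0 <= gbinom m b.
Proof.
  intros Hb. unfold gbinom.
  apply Rmult_le_pos; [|left; apply Rinv_0_lt_compat, INR_fact_lt_0].
  induction m as [|m IH]; [simpl; lra|].
  change (rising_prod b (S m)) with (rising_prod b m * (b + INR (S m))).
  apply Rmult_le_pos; [exact IH|]. pose proof (pos_INR m). rewrite S_INR. lra.
Qed.

Lemma gbinom_hockey_stick b N i : (i < N)%nat ->
  sum_lt (fun k => if (i <=? k)%nat then gbinom (N - S k) (b - 1) else 0) N = gbinom (N - S i) b.
Proof.
  revert i; induction N as [|N IH]; intros i Hi; [lia|].
  rewrite sum_lt_first. destruct i as [|i].
  - rewrite (sum_lt_ext _ (fun k => if (0 <=? k)%nat then gbinom (N - S k) (b - 1) else 0))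
      by (intros; reflexivity).
    destruct N as [|N].
    + simpl. rewrite !gbinom_0. ring.
    + rewrite IH by lia. simpl (0 <=? 0)%nat.
      replace (S (S N) - 1)%nat with (S N) by lia. replace (S N - 1)%nat with N by lia.
      rewrite (gbinom_pascal N b). ring.
  - rewrite (sum_lt_ext _ (fun k => if (i <=? k)%nat then gbinom (N - S k) (b - 1) else 0))
      by (intros; reflexivity).
    rewrite IH by lia. simpl. ring.
Qed.

Lemma sum_gbinom_by_parts (u : nat -> R) b N :
  sum_lt (fun i => gbinom (N - S i) b * u i) N =
  sum_lt (fun k => gbinom (N - S k) (b - 1) * sum_lt u (S k)) N.
Proof.
  transitivity (sum_lt (fun k =>
    sum_lt (fun i => if (i <=? k)%nat then gbinom (N - S k) (b - 1) * u i else 0) N) N).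
  - rewrite sum_lt_swap. apply sum_lt_ext. intros i Hi.
    rewrite <- (gbinom_hockey_stick b N i Hi), Rmult_comm, <- sum_lt_scal.
    apply sum_lt_ext. intros k _. destruct (i <=? k)%nat; ring.
  - apply sum_lt_ext. intros k Hk.
    rewrite <- sum_lt_scal, <- (sum_lt_truncate _ k N Hk).
    apply sum_lt_ext. intros i _. destruct (i <=? k)%nat; ring.
Qed.

Definition sin_psum n t := sum_lt (fun i => sin (INR (S i) * t)) n.

Definition fejer_sum n t := sum_lt (fun m => sin_psum (S m) t) n.

Lemma sin_psum_telescope n t :
  2 * (1 - cos t) * sin_psum n t = sin t + sin (INR n * t) - sin (INR (S n) * t).
Proof.
  induction n as [|n IH].
  - unfold sin_psum. simpl. rewrite Rmult_0_l, Rmult_1_l, sin_0. ring.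
  - change (sin_psum (S n) t) with (sin_psum n t + sin (INR (S n) * t)).
    rewrite Rmult_plus_distr_l, IH.
    replace (INR (S (S n)) * t) with (INR (S n) * t + t) by (rewrite (S_INR (S n)); ring).
    replace (INR n * t) with (INR (S n) * t - t) by (rewrite S_INR; ring).
    rewrite sin_plus, sin_minus. ring.
Qed.

Lemma fejer_sum_closed n t :
  2 * (1 - cos t) * fejer_sum n t = INR (S n) * sin t - sin (INR (S n) * t).
Proof.
  induction n as [|n IH].
  - unfold fejer_sum. simpl. rewrite !Rmult_1_l. ring.
  - change (fejer_sum (S n) t) with (fejer_sum n t + sin_psum (S n) t).
    rewrite Rmult_plus_distr_l, IH, sin_psum_telescope.
    rewrite (S_INR (S n)). ring.
Qed.

Lemma cos_lt_1 t : 0 < t < PI -> cos t < 1.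
Proof. intros. rewrite <- cos_0. apply cos_decreasing_1; lra. Qed.

Lemma cos_gt_m1 t : 0 < t < PI -> -1 < cos t.
Proof. intros. rewrite <- cos_PI. apply cos_decreasing_1; lra. Qed.

Lemma Rabs_sin_add_le s t : 0 <= sin t -> Rabs (sin (s + t)) <= Rabs (sin s) + sin t.
Proof.
  intros Ht. rewrite sin_plus.
  pose proof (Rabs_triang (sin s * cos t) (cos s * sin t)) as Htri.
  rewrite !Rabs_mult, (Rabs_pos_eq (sin t)) in Htri by exact Ht.
  assert (Rabs (cos t) <= 1) by (apply Rabs_le, COS_bound).
  assert (Rabs (cos s) <= 1) by (apply Rabs_le, COS_bound).
  pose proof (Rabs_pos (sin s)). nra.
Qed.

Lemma Rabs_sin_mult_le m t : 0 <= sin t -> Rabs (sin (INR m * t)) <= INR m * sin t.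
Proof.
  intros Ht. induction m as [|m IH].
  - simpl. rewrite Rmult_0_l, sin_0, Rabs_R0. lra.
  - rewrite S_INR, Rmult_plus_distr_r, Rmult_1_l.
    pose proof (Rabs_sin_add_le (INR m * t) t Ht). lra.
Qed.

Lemma Rabs_sin_mult_lt m t : 0 < t < PI -> (2 <= m)%nat -> Rabs (sin (INR m * t)) < INR m * sin t.
Proof.
  intros Ht Hm. pose proof (sin_gt_0 t (proj1 Ht) (proj2 Ht)) as Hs.
  replace m with (2 + (m - 2))%nat by lia. induction (m - 2)%nat as [|p IH].
  - replace (INR (2 + 0) * t) with (2 * t) by (simpl; ring).
    rewrite sin_2a, !Rabs_mult, (Rabs_pos_eq 2), (Rabs_pos_eq (sin t)) by lra.
    pose proof (cos_lt_1 t Ht). pose proof (cos_gt_m1 t Ht).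
    assert (Rabs (cos t) < 1) by (apply Rabs_def1; lra).
    simpl. nra.
  - replace (2 + S p)%nat with (S (2 + p)) by lia.
    rewrite S_INR, Rmult_plus_distr_r, Rmult_1_l.
    pose proof (Rabs_sin_add_le (INR (2 + p) * t) t (Rlt_le _ _ Hs)). lra.
Qed.

Lemma fejer_sum_nonneg n t : 0 < t < PI -> 0 <= fejer_sum n t.
Proof.
  intros Ht. pose proof (fejer_sum_closed n t). pose proof (cos_lt_1 t Ht).
  pose proof (Rabs_sin_mult_le (S n) t (Rlt_le _ _ (sin_gt_0 t (proj1 Ht) (proj2 Ht)))).
  pose proof (Rle_abs (sin (INR (S n) * t))).
  nra.
Qed.

Lemma cos_3x_eq_1 t : 0 < t < PI -> cos (3 * t) = 1 -> t = 2 * PI / 3.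
Proof.
  intros Ht Hc.
  assert (Hz : sin (3 * t / 2) = 0).
  { pose proof (cos_2a_sin (3 * t / 2)) as Hd.
    replace (2 * (3 * t / 2)) with (3 * t) in Hd by field. nra. }
  destruct (Rtotal_order (3 * t / 2) PI) as [Hl|[He|Hg]]; [| lra |].
  - pose proof (sin_gt_0 (3 * t / 2) ltac:(lra) Hl). lra.
  - pose proof (sin_lt_0 (3 * t / 2) Hg ltac:(lra)). lra.
Qed.

(* The right-hand side of 2 (1 - cos t) (F_(2k+1)(t) - sin t), see [odd_fejer_excess]. *)
Lemma odd_fejer_numerator k t : (1 <= k)%nat -> 0 < t < PI ->
  let q := 2 * INR k * sin t + sin (2 * t) - sin (INR (2 * k + 2) * t) in
  0 <= q /\ (q = 0 -> t = 2 * PI / 3).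
Proof.
  intros Hk Ht q. pose proof (sin_gt_0 t (proj1 Ht) (proj2 Ht)) as Hs.
  assert (Hq : q = 2 * (INR k * sin t - cos (INR (k + 2) * t) * sin (INR k * t))).
  { unfold q.
    replace (INR (2 * k + 2) * t) with (INR (k + 2) * t + INR k * t)
      by (rewrite !plus_INR, mult_INR; simpl; ring).
    replace (2 * t) with (INR (k + 2) * t - INR k * t) by (rewrite !plus_INR; simpl; ring).
    rewrite sin_plus, sin_minus. ring. }
  assert (Hcs : cos (INR (k + 2) * t) * sin (INR k * t) <= Rabs (sin (INR k * t))).
  { pose proof (Rle_abs (cos (INR (k + 2) * t) * sin (INR k * t))) as Ha.
    rewrite Rabs_mult in Ha.
    assert (Rabs (cos (INR (k + 2) * t)) <= 1) by (apply Rabs_le, COS_bound).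
    pose proof (Rabs_pos (sin (INR k * t))). nra. }
  pose proof (Rabs_sin_mult_le k t (Rlt_le _ _ Hs)).
  split; [lra|]. intros Hq0.
  destruct (Nat.eq_dec k 1) as [->|Hk1].
  - apply cos_3x_eq_1; [exact Ht|].
    replace (INR (1 + 2) * t) with (3 * t) in Hq by (simpl; ring).
    replace (INR 1) with 1 in Hq by reflexivity. rewrite !Rmult_1_l in Hq.
    assert (Hprod : sin t * (1 - cos (3 * t)) = 0) by (rewrite Hq in Hq0; lra).
    destruct (Rmult_integral _ _ Hprod); lra.
  - pose proof (Rabs_sin_mult_lt k t Ht ltac:(lia)). lra.
Qed.

Lemma odd_fejer_excess k t : (1 <= k)%nat -> 0 < t < PI ->
  0 <= fejer_sum (2 * k + 1) t - sin t /\
  (fejer_sum (2 * k + 1) t - sin t = 0 -> t = 2 * PI / 3).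
Proof.
  intros Hk Ht. destruct (odd_fejer_numerator k t Hk Ht) as [Hq0 Hq].
  assert (Hid : 2 * (1 - cos t) * (fejer_sum (2 * k + 1) t - sin t) =
                2 * INR k * sin t + sin (2 * t) - sin (INR (2 * k + 2) * t)).
  { rewrite Rmult_minus_distr_l, fejer_sum_closed, sin_2a.
    replace (S (2 * k + 1)) with (2 * k + 2)%nat by lia.
    rewrite plus_INR, mult_INR. simpl. ring. }
  pose proof (cos_lt_1 t Ht). split.
  - destruct (Rle_dec 0 (fejer_sum (2 * k + 1) t - sin t)); [assumption | nra].
  - intros Hz. apply Hq. rewrite <- Hid, Hz. ring.
Qed.

Lemma fejer_le_sin_gbinom n a t : 1 <= a -> 0 < t < PI ->
  fejer_sum n t <= sum_lt (fun i => gbinom (n - S i) a * sin (INR (S i) * t)) n.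
Proof.
  intros Ha Ht. destruct n as [|N]; [simpl; unfold fejer_sum; simpl; lra|].
  rewrite sum_gbinom_by_parts, (sum_gbinom_by_parts (fun k => sum_lt _ (S k))).
  rewrite (sum_lt_ext _ (fun k => gbinom (S N - S k) (a - 1 - 1) * fejer_sum (S k) t))
    by (intros; reflexivity).
  rewrite sum_lt_last, Nat.sub_diag, gbinom_0, Rmult_1_l.
  assert (0 <= sum_lt (fun k => gbinom (S N - S k) (a - 1 - 1) * fejer_sum (S k) t) N).
  { apply sum_lt_nonneg. intros i _.
    apply Rmult_le_pos; [apply gbinom_nonneg; lra | apply fejer_sum_nonneg, Ht]. }
  lra.
Qed.

Section CosineSums.

Variable c : nat -> R.
Variable n : nat.

Definition cos_sum t := sum_lt (fun i => c i * (cos (INR (S i) * t) / INR (S i))) n.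
Definition sin_sum t := sum_lt (fun i => c i * sin (INR (S i) * t)) n.
Definition sin_sin_sum x y :=
  sum_lt (fun i => c i * (sin (INR (S i) * x) * sin (INR (S i) * y) / INR (S i))) n.

Lemma derivable_pt_lim_cos_sum t : derivable_pt_lim cos_sum t (- sin_sum t).
Proof.
  unfold cos_sum, sin_sum. induction n as [|m IH]; cbn [sum_lt].
  - rewrite Ropp_0. apply derivable_pt_lim_const.
  - rewrite Ropp_plus_distr.
    apply (derivable_pt_lim_plus
             (fun t => sum_lt (fun i => c i * (cos (INR (S i) * t) / INR (S i))) m)
             (fun t => c m * (cos (INR (S m) * t) / INR (S m)))); [exact IH|].
    assert (Hm : INR (S m) <> 0) by (apply not_0_INR; lia).
    apply is_derive_Reals. revert Hm. generalize (INR (S m)). intros r Hr.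
    auto_derive; [exact I|]. field. exact Hr.
Qed.

Lemma cos_sum_opp t : cos_sum (- t) = cos_sum t.
Proof.
  apply sum_lt_ext. intros i _.
  replace (INR (S i) * - t) with (- (INR (S i) * t)) by ring. rewrite cos_neg. reflexivity.
Qed.

Lemma cos_sum_2PI_sub t : cos_sum (2 * PI - t) = cos_sum t.
Proof.
  apply sum_lt_ext. intros i _.
  replace (INR (S i) * (2 * PI - t)) with (- (INR (S i) * t) + 2 * INR (S i) * PI) by ring.
  rewrite cos_period, cos_neg. reflexivity.
Qed.

Lemma sin_sin_sum_cos_sum x y : sin_sin_sum x y = (cos_sum (x - y) - cos_sum (x + y)) / 2.
Proof.
  unfold sin_sin_sum, cos_sum. rewrite <- sum_lt_sub, Rdiv_def, Rmult_comm, <- sum_lt_scal.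
  apply sum_lt_ext. intros i _.
  assert (INR (S i) <> 0) by (apply not_0_INR; lia).
  rewrite (Rmult_minus_distr_l (INR (S i)) x y), (Rmult_plus_distr_l (INR (S i)) x y), cos_minus, cos_plus. field. assumption.
Qed.

Lemma sin_sin_sum_reflect x y : 0 < x < PI -> 0 < y < PI ->
  exists u w, 0 <= u < w /\ w <= PI /\ sin_sin_sum x y = (cos_sum u - cos_sum w) / 2.
Proof.
  intros Hx Hy. rewrite sin_sin_sum_cos_sum.
  assert (Hu : cos_sum (x - y) = cos_sum (Rabs (x - y))).
  { unfold Rabs. destruct (Rcase_abs (x - y)); [rewrite cos_sum_opp|]; reflexivity. }
  assert (0 <= Rabs (x - y)) by apply Rabs_pos.
  rewrite Hu. exists (Rabs (x - y)).
  destruct (Rle_dec (x + y) PI).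
  - exists (x + y). repeat split; try lra. apply Rabs_def1; lra.
  - exists (2 * PI - (x + y)). rewrite cos_sum_2PI_sub. repeat split; try lra.
    apply Rabs_def1; lra.
Qed.

End CosineSums.

Lemma derivative_neg_strict_decrease (f g : R -> R) p q : p < q ->
  (forall t, derivable_pt_lim f t (g t)) ->
  (forall t, p < t < q -> g t <= 0) ->
  (forall t1 t2, p < t1 < q -> p < t2 < q -> g t1 = 0 -> g t2 = 0 -> t1 = t2) ->
  f q < f p.
Proof.
  intros Hpq Hd Hneg Hzero. set (m := (p + q) / 2).
  destruct (MVT_cor2 f g p m ltac:(unfold m; lra) (fun t _ => Hd t)) as [c1 [E1 Hc1]].
  destruct (MVT_cor2 f g m q ltac:(unfold m; lra) (fun t _ => Hd t)) as [c2 [E2 Hc2]].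
  assert (h1 : p < c1 < q) by (unfold m in *; lra).
  assert (h2 : p < c2 < q) by (unfold m in *; lra).
  pose proof (Hneg c1 h1). pose proof (Hneg c2 h2).
  assert (0 < m - p) by (unfold m; lra). assert (0 < q - m) by (unfold m; lra).
  destruct (Req_dec (g c1) 0) as [z1|z1]; [destruct (Req_dec (g c2) 0) as [z2|z2]|].
  - pose proof (Hzero c1 c2 h1 h2 z1 z2). lra.
  - nra.
  - nra.
Qed.

Lemma sin_sin_sum_pos c n x y :
  (forall t, 0 < t < PI -> 0 <= sin_sum c n t) ->
  (forall t1 t2, 0 < t1 < PI -> 0 < t2 < PI -> sin_sum c n t1 = 0 -> sin_sum c n t2 = 0 -> t1 = t2) ->
  0 < x < PI -> 0 < y < PI -> 0 < sin_sin_sum c n x y.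
Proof.
  intros Hnn Hz Hx Hy. destruct (sin_sin_sum_reflect c n x y Hx Hy) as [u [w [Huw [Hw ->]]]].
  enough (cos_sum c n w < cos_sum c n u) by lra.
  apply (derivative_neg_strict_decrease _ (fun t => - sin_sum c n t)); [lra | apply derivable_pt_lim_cos_sum | |].
  - intros t Ht. pose proof (Hnn t ltac:(lra)). lra.
  - intros t1 t2 H1 H2 Z1 Z2. apply Hz; lra.
Qed.

Definition theta_excess_coef n a i := gbinom (n - S i) a - (if (i =? 0)%nat then 1 else 0).

Lemma Theta_sub_sin_mul n a x y : (1 <= n)%nat ->
  sin_sin_sum (theta_excess_coef n a) n x y = Theta n a x y - sin x * sin y.
Proof.
  intros Hn. unfold sin_sin_sum, theta_excess_coef, Theta. rewrite sum_f_R0_sum_lt.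
  replace (S (n - 1)) with n by lia. destruct n as [|m]; [lia|].
  rewrite sum_lt_drop_first_unit. replace (INR 1) with 1 by reflexivity.
  f_equal; [apply sum_lt_ext; intros; field; apply not_0_INR; lia | rewrite !Rmult_1_l; field].
Qed.

Lemma Theta_1 a x y : Theta 1 a x y = sin x * sin y.
Proof.
  pose proof (Theta_sub_sin_mul 1 a x y (le_n 1)) as Hsub.
  unfold sin_sin_sum, theta_excess_coef in Hsub. simpl in Hsub. rewrite gbinom_0 in Hsub. lra.
Qed.

Lemma fejer_sub_sin_le_sin_sum n a t : (1 <= n)%nat -> 1 <= a -> 0 < t < PI ->
  fejer_sum n t - sin t <= sin_sum (theta_excess_coef n a) n t.
Proof.
  intros Hn Ha Ht. pose proof (fejer_le_sin_gbinom n a t Ha Ht).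
  unfold sin_sum, theta_excess_coef. destruct n as [|m]; [lia|].
  rewrite sum_lt_drop_first_unit, Rmult_1_l. lra.
Qed.

Lemma Theta_odd_gt_sin_mul k a x y : (1 <= k)%nat -> 1 <= a -> 0 < x < PI -> 0 < y < PI ->
  sin x * sin y < Theta (2 * k + 1) a x y.
Proof.
  intros Hk Ha Hx Hy.
  pose proof (fejer_sub_sin_le_sin_sum (2 * k + 1) a) as Hsin.
  enough (0 < sin_sin_sum (theta_excess_coef (2 * k + 1) a) (2 * k + 1) x y)
    by (rewrite Theta_sub_sin_mul in * by lia; lra).
  apply sin_sin_sum_pos; [| | exact Hx | exact Hy].
  - intros t Ht. pose proof (Hsin t ltac:(lia) Ha Ht).
    pose proof (odd_fejer_excess k t Hk Ht). lra.
  - intros t1 t2 H1 H2 Z1 Z2.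
    pose proof (Hsin t1 ltac:(lia) Ha H1). pose proof (Hsin t2 ltac:(lia) Ha H2).
    destruct (odd_fejer_excess k t1 Hk H1) as [P1 E1].
    destruct (odd_fejer_excess k t2 Hk H2) as [P2 E2].
    rewrite E1, E2 by lra. reflexivity.
Qed.

Theorem theorem3p7 (n : nat) (a x y : R) :
  (1 <= n)%nat -> Nat.Odd n -> 1 <= a -> 0 < x < PI -> 0 < y < PI ->
  sin x * sin y <= Theta n a x y /\
  (Theta n a x y = sin x * sin y <-> n = 1%nat).
Proof.
  intros Hn [k ->] Ha Hx Hy.
  destruct (Nat.eq_dec k 0) as [->|Hk].
  - simpl. rewrite Theta_1. split; [lra | tauto].
  - pose proof (Theta_odd_gt_sin_mul k a x y ltac:(lia) Ha Hx Hy).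
    split; [lra | split; intros; [lra | lia]].
Qed.
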